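(* Let $\tau\in\mathcal{L}$ and $a\in\mathbb{R}$. Then $\mathcal{N}_\tau(a)\neq\mathcal{N}_\eta(a)$ if and only if every set in $\mathcal{N}_\tau(a)$ is an unbounded subset of $\mathbb{R}$.
   Context: $\eta$ denotes the Euclidean topology on $\mathbb{R}$. $\mathcal{L}$ denotes the family of all Hausdorff topologies $\tau$ on $\mathbb{R}$ with $\tau\subset\eta$. $\mathcal{N}_\tau(a)$ denotes the filter of neighborhoods of $a$ in $(\mathbb{R},\tau)$. *)

(* The real line is an arbitrary realType R
   (i.e. a model of the reals); eta is its canonical (Euclidean) topology. *)
From HB Require Import structures.
From mathcomp Require Import all_boot all_order all_algebra.
From mathcomp Require Import all_classical all_reals all_analysis.
Set Implicit Arguments. Unset Strict Implicit. Unset Printing Implicit Defensive.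
Import Order.TTheory GRing.Theory Num.Theory.
Import numFieldNormedType.Exports.
Local Open Scope classical_set_scope.
Local Open Scope ring_scope.

Definition is_topology {R : realType} (tau : set (set R)) : Prop :=
  tau setT /\ tau set0 /\
  (forall F : set (set R), F `<=` tau -> tau (\bigcup_(A in F) A)) /\
  (forall A B, tau A -> tau B -> tau (A `&` B)).

Definition is_hausdorff {R : realType} (tau : set (set R)) : Prop :=
  forall x y : R, x <> y ->
    exists U V, tau U /\ tau V /\ U x /\ V y /\ U `&` V = set0.

Definition coarser_than_euclid {R : realType} (tau : set (set R)) : Prop :=
  forall U, tau U -> open U.

Definition in_L {R : realType} (tau : set (set R)) : Prop :=
  is_topology tau /\ is_hausdorff tau /\ coarser_than_euclid tau.

Definition nbhs_tau {R : realType} (tau : set (set R)) (a : R) : set (set R) :=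
  [set N | exists U, tau U /\ U a /\ U `<=` N].

From HB Require Import structures.
From mathcomp Require Import all_boot all_order all_algebra.
From mathcomp Require Import all_classical all_reals all_analysis.
Import Order.TTheory GRing.Theory Num.Theory.
Import numFieldNormedType.Exports.
Local Open Scope classical_set_scope.
Local Open Scope ring_scope.

(* If some tau-neighbourhood U of a lies in [-M, M], let V be a Euclidean open
   set containing a.  Since tau is Hausdorff and coarser than the Euclidean
   topology, every point of the compact set [-M, M] \ V has a tau-open
   neighbourhood disjoint from a tau-open neighbourhood of a; finitely many of
   these cover [-M, M] \ V, and the intersection W of the corresponding
   neighbourhoods of a is a tau-open set with U `&` W included in V.  Hence
   N_tau(a) = N_eta(a).  Conversely, if the filters agree, the unit ball around
   a is a bounded tau-neighbourhood. *)

Lemma ball_bounded (K : realFieldType) (V : normedModType K) (a : V) (r : K) :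
  [bounded x | x in ball a r].
Proof.
rewrite /bounded_near; near=> M => x; rewrite -ball_normE /= => axr.
rewrite -[x](subrK a); apply: (le_trans (ler_normD _ _)).
have /ltW xar : `|x - a| < r by rewrite distrC.
apply: le_trans (lerD xar (lexx _)) _; near: M; exact/nbhs_pinfty_ge/num_real.
Unshelve. all: by end_near. Qed.

Section CoarserHausdorffTopology.
Variables (R : realType) (tau : set (set R)) (a : R).
Hypotheses (top : is_topology tau) (haus : is_hausdorff tau)
  (coarse : coarser_than_euclid tau).

Lemma nbhs_tau_sub_nbhs : nbhs_tau tau a `<=` nbhs a.
Proof.
move=> N [U [tU [Ua UN]]]; rewrite nbhsE.
by exists U => //; split; [exact: coarse|].
Qed.

Lemma separate_point_seq (s : seq (set R)) :
  (forall Q, Q \in s -> exists W, tau W /\ W a /\ Q `&` W = set0) ->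
  exists W, tau W /\ W a /\ forall Q, Q \in s -> Q `&` W = set0.
Proof.
have [tT [_ [_ tI]]] := top.
elim: s => [|Q s IH] sepQs.
  by exists setT; split => //; split => // Q; rewrite in_nil.
have [W [tW [Wa QW]]] := sepQs Q (mem_head _ _).
have [|W' [tW' [W'a sW']]] := IH.
  by move=> P Ps; apply: sepQs; rewrite in_cons Ps orbT.
exists (W `&` W'); split; first exact: tI.
split=> // P; rewrite in_cons => /orP[/eqP->|Ps].
  by rewrite setIA QW set0I.
by rewrite setICA (sW' P Ps) setI0.
Qed.

Lemma compact_separate_point {K : set R} : compact K -> ~ K a ->
  exists W, tau W /\ W a /\ K `&` W = set0.
Proof.
move=> cK Ka; move: cK; rewrite compact_cover.
pose sep := [set Q : set R | tau Q /\ exists W, tau W /\ W a /\ Q `&` W = set0].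
case/(_ _ sep id (fun Q sepQ => coarse Q sepQ.1)) => [x Kx|D Dsep DK].
  have xa : x <> a by move=> xa; apply: Ka; rewrite -xa.
  have [Q [W [tQ [tW [Qx [Wa QW]]]]]] := haus _ _ xa.
  by exists Q => //; split => //; exists W.
have [|W [tW [Wa DW]]] := separate_point_seq (finmap.enum_fset D).
  by move=> Q /Dsep; rewrite inE => -[].
exists W; split => //; split => //; rewrite -subset0 => x [Kx Wx].
have [Q DQ Qx] := DK x Kx.
by rewrite -(DW Q DQ).
Qed.

Lemma nbhs_sub_nbhs_tau_bounded (N : set R) :
  nbhs_tau tau a N -> [bounded x | x in N] -> nbhs a `<=` nbhs_tau tau a.
Proof.
have [_ [_ [_ tI]]] := top.
move=> [U [tU [Ua UN]]] /ex_strict_bound_gt0[M _ NM].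
move=> V; rewrite nbhsE => -[V' [oV' V'a] V'V].
have cK := compact_closedI (@segment_compact R (-M) M) (open_closedC oV').
have [|W [tW [Wa KW]]] := compact_separate_point cK.
  by move=> [_]; apply.
exists (U `&` W); split; first exact: tI.
split=> // y [Uy Wy]; apply: V'V; apply: contrapT => V'y.
have Ky : (`[-M, M]%classic `&` ~` V') y.
  by split=> //=; rewrite in_itv /= -ler_norml; apply/ltW/NM/UN.
by rewrite -[False]/(set0 y) -KW.
Qed.

End CoarserHausdorffTopology.

Theorem proposition1 (R : realType) (tau : set (set R)) (a : R) :
  in_L tau ->
  (nbhs_tau tau a <> (nbhs a : set (set R)) <->
   forall N : set R, nbhs_tau tau a N -> ~ [bounded x | x in N]).
Proof.
move=> [top [haus coarse]]; split=> [neq N tauN Nb|unbounded eq_nbhs].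
  apply: neq; rewrite eqEsubset; split.
    exact: (@nbhs_tau_sub_nbhs R tau a coarse).
  exact: (@nbhs_sub_nbhs_tau_bounded R tau a top haus coarse N tauN Nb).
apply: (unbounded (ball a 1)); last exact: ball_bounded.
by rewrite eq_nbhs; apply: nbhsx_ballx.
Qed.
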